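(* On the vector space $\mathbb{R}^{(\mathbb{N})}$, let $\boldsymbol{\mu}$ be the finest vector topology and $\boldsymbol{\nu}$ the finest locally convex vector topology in which $e_n\to\mathbf{0}$. Then: (1) the family $\mathcal{N}_{\mathbf{s}}$ of all sets $U(\mathrm{S})=\bigcup_{k\in\omega}\big(S(\mathbf{a}_0)+\cdots+S(\mathbf{a}_k)\big)$, where $\mathrm{S}=\{S(\mathbf{a}_k)\}_{k\in\omega}$ ranges over all sequences with $\mathbf{a}_k\in\mathcal{A}$, is a base at $\mathbf{0}$ for $\boldsymbol{\mu}$; (2) the family $\{\mathrm{conv}(V): V\in\mathcal{N}_{\mathbf{s}}\}$ is a base at $\mathbf{0}$ for $\boldsymbol{\nu}$; (3) for every $\boldsymbol{\nu}$-neighborhood $U$ of $\mathbf{0}$, every $t\in\mathbb{N}$ and every $a>0$ there is $q\in\mathbb{N}$ such that every vector $v=\lambda_1 a e_{m_1}+\cdots+\lambda_t a e_{m_t}$ with $q<m_1<\cdots<m_t$ and $\lambda_1,\dots,\lambda_t\in[-1,1]$ belongs to $U$.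
   Context: $\mathbb{N}=\{1,2,\dots\}$, $\omega=\{0\}\cup\mathbb{N}$. $\mathbb{R}^{(\mathbb{N})}$ is the space of finitely supported real sequences, $\mathbf{0}$ its zero vector, and $e_n$ the sequence with $1$ in position $n$ and $0$ elsewhere. (With $\mathbf{s}=\{1/n\}_{n\in\mathbb{N}}\cup\{0\}$ and base point $0$, $(\mathbb{R}^{(\mathbb{N})},\boldsymbol{\nu})$ is the Graev free locally convex space $L_G(\mathbf{s})$, the point $1/n$ corresponding to $e_n$.) $\mathcal{A}$ is the family of all sequences $\mathbf{a}=(a_n)_{n\in\mathbb{N}}$ of positive reals with $\lim_n a_n=\infty$. For $\mathbf{a}\in\mathcal{A}$, $S(\mathbf{a})=\bigcup_{n\in\mathbb{N}}\{t e_n : |t|<a_n\}$. $\mathrm{conv}(A)$ denotes the convex hull of $A$. *)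

From Stdlib Require Import Reals List.
Open Scope R_scope.

(* Vectors: real sequences indexed by nat; coordinate 0 is unused
   (index set is N = {1,2,...}). *)
Definition vec := nat -> R.

(* The carrier R^(N): finitely supported sequences (with x 0 = 0). *)
Definition fsupp (x : vec) : Prop :=
  x O = 0 /\ exists N : nat, forall n : nat, (N < n)%nat -> x n = 0.

Definition vzero : vec := fun _ => 0.
Definition vadd (x y : vec) : vec := fun n => x n + y n.
Definition vscal (t : R) (x : vec) : vec := fun n => t * x n.
Definition e (n : nat) : vec := fun k => if Nat.eqb k n then 1 else 0.

Definition topology (tau : (vec -> Prop) -> Prop) : Prop :=
  (forall U, tau U -> forall x, U x -> fsupp x) /\
  tau (fun _ => False) /\
  tau fsupp /\
  (forall F : (vec -> Prop) -> Prop,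
      (forall U, F U -> tau U) -> tau (fun x => exists U, F U /\ U x)) /\
  (forall U V, tau U -> tau V -> tau (fun x => U x /\ V x)).

Definition nbhd (tau : (vec -> Prop) -> Prop) (U : vec -> Prop) (x : vec) : Prop :=
  exists W, tau W /\ W x /\ (forall y, W y -> U y).

Definition vector_topology (tau : (vec -> Prop) -> Prop) : Prop :=
  topology tau /\
  (forall x y, fsupp x -> fsupp y -> forall W, nbhd tau W (vadd x y) ->
     exists U V, nbhd tau U x /\ nbhd tau V y /\
       (forall u v, U u -> V v -> W (vadd u v))) /\
  (forall (t : R) x, fsupp x -> forall W, nbhd tau W (vscal t x) ->
     exists (d : R) U, 0 < d /\ nbhd tau U x /\
       (forall s u, Rabs (s - t) < d -> U u -> W (vscal s u))).

Definition convex (A : vec -> Prop) : Prop :=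
  forall x y (t : R), A x -> A y -> 0 <= t <= 1 ->
    A (vadd (vscal t x) (vscal (1 - t) y)).

Definition locally_convex (tau : (vec -> Prop) -> Prop) : Prop :=
  vector_topology tau /\
  (forall U, nbhd tau U vzero ->
     exists V, nbhd tau V vzero /\ convex V /\ (forall x, V x -> U x)).

Definition e_to_zero (tau : (vec -> Prop) -> Prop) : Prop :=
  forall U, nbhd tau U vzero -> exists N : nat, forall n : nat, (N < n)%nat -> U (e n).

Definition is_mu (mu : (vec -> Prop) -> Prop) : Prop :=
  vector_topology mu /\ e_to_zero mu /\
  (forall tau, vector_topology tau -> e_to_zero tau -> forall U, tau U -> mu U).

Definition is_nu (nu : (vec -> Prop) -> Prop) : Prop :=
  locally_convex nu /\ e_to_zero nu /\
  (forall tau, locally_convex tau -> e_to_zero tau -> forall U, tau U -> nu U).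

(* The family A: positive sequences (a_n)_{n in N} tending to infinity
   (the value a 0 is irrelevant). *)
Definition in_A (a : nat -> R) : Prop :=
  (forall n : nat, (1 <= n)%nat -> 0 < a n) /\ cv_infty a.

Definition Sa (a : nat -> R) : vec -> Prop :=
  fun x => exists (n : nat) (t : R), (1 <= n)%nat /\ Rabs t < a n /\ x = vscal t (e n).

Fixpoint Ssum (as_ : nat -> nat -> R) (k : nat) : vec -> Prop :=
  match k with
  | O => Sa (as_ O)
  | S k' => fun x => exists y z, Ssum as_ k' y /\ Sa (as_ (S k')) z /\ x = vadd y z
  end.

Definition Useq (as_ : nat -> nat -> R) : vec -> Prop :=
  fun x => exists k : nat, Ssum as_ k x.

Definition Ns (V : vec -> Prop) : Prop :=
  exists as_ : nat -> nat -> R, (forall k, in_A (as_ k)) /\ (forall x, V x <-> Useq as_ x).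

Definition wsum (l : list (R * vec)) : vec :=
  fold_right (fun p acc => vadd (vscal (fst p) (snd p)) acc) vzero l.
Definition weights (l : list (R * vec)) : R :=
  fold_right (fun p acc => fst p + acc) 0 l.
Definition conv (A : vec -> Prop) : vec -> Prop :=
  fun x => exists l : list (R * vec),
    Forall (fun p => 0 <= fst p /\ A (snd p)) l /\ weights l = 1 /\ x = wsum l.

Definition base_at0 (tau : (vec -> Prop) -> Prop) (B : (vec -> Prop) -> Prop) : Prop :=
  (forall V, B V -> nbhd tau V vzero) /\
  (forall W, nbhd tau W vzero -> exists V, B V /\ (forall x, V x -> W x)).

Fixpoint lincomb (lam : nat -> R) (a : R) (m : nat -> nat) (t : nat) : vec :=
  match t with
  | O => vzero
  | S t' => vadd (lincomb lam a m t') (vscal (lam (S t') * a) (e (m (S t'))))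
  end.

(** A family [B] of sets containing [0] that is closed under finite
    intersections, "halving", scaling by bounded scalars and absorbing,
    generates a vector topology with [B] as base at [0].  The sets [U(S)]
    form such a family, and so do their convex hulls (giving a locally
    convex topology); in both topologies [e_n -> 0] since [e_n] lies in
    [S(a_0)] as soon as [a_0(n) > 1].  Conversely, in any vector topology in
    which [e_n -> 0], a neighbourhood [W] of [0] contains [U(S)] for a
    suitable [S]: choose neighbourhoods [W ⊇ V_0 + V_0], [V_k ⊇ V_(k+1) + V_(k+1)],
    and [a_k] with [S(a_k) ⊆ V_(k+1)], which exists because [t e_n -> 0]
    uniformly for bounded [t].  Finally, with [|λ_i| <= 1], the vector
    [Σ λ_i a e_(m_i)] is the average of the points [t λ_i a e_(m_i)],
    which lie in [S(a_0)] once [m_i] is large. *)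

From Stdlib Require Import Reals List Lra Lia FunctionalExtensionality
  ClassicalEpsilon Classical.
Open Scope R_scope.

Ltac vec_ext := apply functional_extensionality; intro; unfold vadd, vscal, vzero; try ring.

Lemma vadd_0_r x : vadd x vzero = x.
Proof. vec_ext. Qed.

Lemma vadd_0_l x : vadd vzero x = x.
Proof. vec_ext. Qed.

Lemma vadd_assoc x y z : vadd (vadd x y) z = vadd x (vadd y z).
Proof. vec_ext. Qed.

Lemma vscal_0_r t : vscal t vzero = vzero.
Proof. vec_ext. Qed.

Lemma vscal_0_l x : vscal 0 x = vzero.
Proof. vec_ext. Qed.

Lemma vscal_1_l x : vscal 1 x = x.
Proof. vec_ext. Qed.

Lemma fsupp_vzero : fsupp vzero.
Proof. split; [reflexivity | exists O; reflexivity]. Qed.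

Lemma fsupp_vadd x y : fsupp x -> fsupp y -> fsupp (vadd x y).
Proof.
  intros [hx0 [N1 hx]] [hy0 [N2 hy]]; split; unfold vadd.
  - rewrite hx0, hy0; ring.
  - exists (Nat.max N1 N2); intros n hn. rewrite hx, hy by lia. ring.
Qed.

Lemma fsupp_vscal t x : fsupp x -> fsupp (vscal t x).
Proof.
  intros [hx0 [N hx]]; split; unfold vscal.
  - rewrite hx0; ring.
  - exists N; intros n hn. rewrite hx by lia. ring.
Qed.

Lemma fsupp_e n : (1 <= n)%nat -> fsupp (e n).
Proof.
  intros hn; split; unfold e.
  - destruct n; [lia | reflexivity].
  - exists n; intros k hk. destruct (Nat.eqb_spec k n); [lia | reflexivity].
Qed.

(** * The family A and the sets U(S) *)

Definition in_A_seq (as_ : nat -> nat -> R) : Prop := forall k, in_A (as_ k).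

Lemma in_A_INR : in_A INR.
Proof.
  split.
  - intros n hn. apply lt_0_INR; lia.
  - intro M. destruct (INR_unbounded M) as [N HN]. exists N. intros n hn.
    apply le_INR in hn. lra.
Qed.

Lemma in_A_min a b : in_A a -> in_A b -> in_A (fun n => Rmin (a n) (b n)).
Proof.
  intros [pa ca] [pb cb]; split.
  - intros n hn. apply Rmin_glb_lt; auto.
  - intro M. destruct (ca M) as [N1 h1], (cb M) as [N2 h2].
    exists (Nat.max N1 N2). intros n hn. apply Rmin_glb_lt; [apply h1 | apply h2]; lia.
Qed.

Lemma in_A_div a M : in_A a -> 0 < M -> in_A (fun n => a n / M).
Proof.
  intros [pa ca] hM; split.
  - intros n hn. apply Rdiv_lt_0_compat; auto.
  - intro K. destruct (ca (K * M)) as [N h]. exists N. intros n hn.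
    specialize (h n hn). apply Rmult_lt_reg_r with M; auto.
    unfold Rdiv. rewrite Rmult_assoc, Rinv_l by lra. lra.
Qed.

Lemma Rabs_mul_div_le s M b : 0 < M -> 0 <= b -> Rabs s <= M -> Rabs s * (b / M) <= b.
Proof.
  intros hM hb hs. apply Rle_trans with (M * (b / M)).
  - apply Rmult_le_compat_r; auto. unfold Rdiv.
    apply Rmult_le_pos; [lra | apply Rlt_le, Rinv_0_lt_compat; lra].
  - right. field. lra.
Qed.

Lemma Sa_vzero a : in_A a -> Sa a vzero.
Proof.
  intros [pa _]. exists 1%nat, 0. split; [lia | split].
  - rewrite Rabs_R0. apply pa; lia.
  - rewrite vscal_0_l. reflexivity.
Qed.

Lemma Sa_fsupp a x : Sa a x -> fsupp x.
Proof. intros [n [t [hn [_ ->]]]]. apply fsupp_vscal, fsupp_e; auto. Qed.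

Lemma Sa_e a n : (1 <= n)%nat -> 1 < a n -> Sa a (e n).
Proof. intros hn ha. exists n, 1. rewrite Rabs_R1, vscal_1_l. auto. Qed.

Lemma Sa_vscal a b c z : in_A a -> (forall n, (1 <= n)%nat -> Rabs c * b n <= a n) ->
  Sa b z -> Sa a (vscal c z).
Proof.
  intros [pa _] hb [n [t [hn [ht ->]]]]. exists n, (c * t). split; [auto | split].
  - rewrite Rabs_mult. destruct (Req_dec c 0) as [->|hc].
    + rewrite Rabs_R0, Rmult_0_l. apply pa; auto.
    + apply Rlt_le_trans with (Rabs c * b n); [|apply hb; auto].
      apply Rmult_lt_compat_l; auto. apply Rabs_pos_lt; auto.
  - vec_ext.
Qed.

Lemma Sa_mono a b z : (forall n, (1 <= n)%nat -> b n <= a n) -> Sa b z -> Sa a z.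
Proof.
  intros hb [n [t [hn [ht ->]]]]. exists n, t. repeat split; auto.
  apply Rlt_le_trans with (b n); auto.
Qed.

Lemma Ssum_fsupp as_ k x : Ssum as_ k x -> fsupp x.
Proof.
  revert x; induction k as [|k IH]; simpl; intros x H.
  - eapply Sa_fsupp; eauto.
  - destruct H as [y [z [hy [hz ->]]]]. apply fsupp_vadd; [auto | eapply Sa_fsupp; eauto].
Qed.

Lemma Ssum_vscal as_ bs c : in_A_seq as_ ->
  (forall i n, (1 <= n)%nat -> Rabs c * bs i n <= as_ i n) ->
  forall k z, Ssum bs k z -> Ssum as_ k (vscal c z).
Proof.
  intros g hb; induction k as [|k IH]; simpl; intros z H.
  - eapply Sa_vscal; eauto.
  - destruct H as [y [w [hy [hw ->]]]]. exists (vscal c y), (vscal c w).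
    split; [auto | split; [eapply Sa_vscal; eauto | vec_ext]].
Qed.

Lemma Ssum_le as_ : in_A_seq as_ -> forall k j y, (k <= j)%nat -> Ssum as_ k y -> Ssum as_ j y.
Proof.
  intros g k j y hkj H. induction hkj as [|j _ IH]; auto. simpl.
  exists y, vzero. split; [auto | split; [apply Sa_vzero, g | rewrite vadd_0_r; auto]].
Qed.

(* The k-th term of the merged sum is dominated by both [as_ (2k)] and [as_ (2k+1)]. *)
Lemma Ssum_add_interleave as_ bs : in_A_seq as_ ->
  (forall i n, (1 <= n)%nat -> bs i n <= as_ (2 * i)%nat n /\ bs i n <= as_ (2 * i + 1)%nat n) ->
  forall K y z, Ssum bs K y -> Ssum bs K z -> Ssum as_ (2 * K + 1) (vadd y z).
Proof.
  intros g hb; induction K as [|K IH]; intros y z hy hz.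
  - simpl. exists y, z. split; [|split; [|reflexivity]];
      (eapply Sa_mono; [|eassumption]); intros n hn; apply (hb O n hn).
  - destruct hy as [y1 [s [hy1 [hs ->]]]], hz as [z1 [r [hz1 [hr ->]]]].
    replace (2 * S K + 1)%nat with (S (S (2 * K + 1))) by lia.
    exists (vadd (vadd y1 z1) s), r. split; [|split].
    + exists (vadd y1 z1), s. split; [auto | split; [|reflexivity]].
      eapply Sa_mono; [|exact hs]. intros n hn.
      replace (S (2 * K + 1)) with (2 * S K)%nat by lia. apply (hb (S K) n hn).
    + eapply Sa_mono; [|exact hr]. intros n hn.
      replace (S (S (2 * K + 1))) with (2 * S K + 1)%nat by lia. apply (hb (S K) n hn).
    + vec_ext.
Qed.

Lemma Ssum_absorbing as_ : in_A_seq as_ -> forall N x, x O = 0 ->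
  (forall n, (N < n)%nat -> x n = 0) ->
  exists d, 0 < d /\ forall r, Rabs r < d -> Ssum as_ N (vscal r x).
Proof.
  intros g N; induction N as [|N IH]; intros x h0 hN.
  - exists 1. split; [lra|]. intros r _. simpl.
    replace (vscal r x) with vzero by (vec_ext; destruct x0; [rewrite h0 | rewrite hN by lia]; ring).
    apply Sa_vzero, g.
  - set (x' := fun n => if Nat.eqb n (S N) then 0 else x n).
    destruct (IH x') as [d' [hd' Hd']].
    { exact h0. }
    { intros n hn. unfold x'. destruct (Nat.eqb_spec n (S N)); auto. apply hN; lia. }
    set (c := x (S N)). set (A := as_ (S N) (S N)).
    assert (hA : 0 < A) by (apply (g (S N)); lia).
    assert (hc : 0 < Rabs c + 1) by (pose proof (Rabs_pos c); lra).
    exists (Rmin d' (A / (Rabs c + 1))). split.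
    { apply Rmin_glb_lt; auto. apply Rdiv_lt_0_compat; auto. }
    intros r hr. simpl. exists (vscal r x'), (vscal (r * c) (e (S N))). split; [|split].
    + apply Hd'. apply Rlt_le_trans with (1 := hr), Rmin_l.
    + exists (S N), (r * c). split; [lia | split; [|reflexivity]].
      assert (hrA : Rabs r * (Rabs c + 1) < A).
      { apply Rlt_le_trans with (A / (Rabs c + 1) * (Rabs c + 1)).
        - apply Rmult_lt_compat_r; auto. apply Rlt_le_trans with (1 := hr), Rmin_r.
        - right. field. lra. }
      rewrite Rabs_mult. pose proof (Rabs_pos r). fold A. nra.
    + vec_ext. unfold x', e, c. destruct (Nat.eqb_spec x0 (S N)); [subst; ring | ring].
Qed.

Lemma Useq_fsupp as_ x : Useq as_ x -> fsupp x.
Proof. intros [k H]; eapply Ssum_fsupp; eauto. Qed.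

Lemma Useq_vzero as_ : in_A_seq as_ -> Useq as_ vzero.
Proof. intros g. exists O. apply Sa_vzero, g. Qed.

Lemma Useq_vscal as_ bs c : in_A_seq as_ ->
  (forall i n, (1 <= n)%nat -> Rabs c * bs i n <= as_ i n) ->
  forall z, Useq bs z -> Useq as_ (vscal c z).
Proof. intros g hb z [k H]. exists k. eapply Ssum_vscal; eauto. Qed.

Lemma Useq_mono as_ bs : in_A_seq as_ ->
  (forall i n, (1 <= n)%nat -> bs i n <= as_ i n) ->
  forall z, Useq bs z -> Useq as_ z.
Proof.
  intros g hb z H. rewrite <- (vscal_1_l z). eapply Useq_vscal; eauto.
  intros. rewrite Rabs_R1, Rmult_1_l. auto.
Qed.

Lemma Useq_div as_ M s z : in_A_seq as_ -> 0 < M -> Rabs s <= M ->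
  Useq (fun k n => as_ k n / M) z -> Useq as_ (vscal s z).
Proof.
  intros g hM hs. apply Useq_vscal; auto. intros i n hn.
  apply Rabs_mul_div_le; auto. apply Rlt_le, (g i); auto.
Qed.

Lemma Useq_half as_ : in_A_seq as_ -> exists bs, in_A_seq bs /\
  forall y z, Useq bs y -> Useq bs z -> Useq as_ (vadd y z).
Proof.
  intros g. set (bs := fun i n => Rmin (as_ (2 * i)%nat n) (as_ (2 * i + 1)%nat n)).
  assert (gb : in_A_seq bs) by (intro k; apply in_A_min; apply g).
  exists bs. split; auto. intros y z [k1 h1] [k2 h2]. exists (2 * Nat.max k1 k2 + 1)%nat.
  apply (Ssum_add_interleave as_ bs g).
  - intros; split; [apply Rmin_l | apply Rmin_r].
  - apply Ssum_le with k1; auto; lia.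
  - apply Ssum_le with k2; auto; lia.
Qed.

Lemma Useq_absorbing as_ : in_A_seq as_ -> forall x, fsupp x ->
  exists d, 0 < d /\ forall r, Rabs r < d -> Useq as_ (vscal r x).
Proof.
  intros g x [h0 [N hN]]. destruct (Ssum_absorbing as_ g N x h0 hN) as [d [hd Hd]].
  exists d; split; auto. intros r hr; exists N; auto.
Qed.

Lemma Useq_e as_ : in_A_seq as_ -> exists N, forall n, (N < n)%nat -> Useq as_ (e n).
Proof.
  intros g. destruct (proj2 (g O) 1) as [N hN]. exists N. intros n hn.
  exists O. apply Sa_e; [lia | apply hN; lia].
Qed.

Lemma Ns_Useq as_ : in_A_seq as_ -> Ns (Useq as_).
Proof. intros g. exists as_. split; [auto | tauto]. Qed.

(** * Convex hulls *)

Notation weighted_in A l := (Forall (fun p : R * vec => 0 <= fst p /\ A (snd p)) l).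

Definition scale_weights (c : R) (l : list (R * vec)) : list (R * vec) :=
  map (fun p => (c * fst p, snd p)) l.

Definition scale_points (c : R) (l : list (R * vec)) : list (R * vec) :=
  map (fun p => (fst p, vscal c (snd p))) l.

Lemma wsum_app l1 l2 : wsum (l1 ++ l2) = vadd (wsum l1) (wsum l2).
Proof.
  induction l1 as [|p l1 IH]; simpl.
  - rewrite vadd_0_l; auto.
  - rewrite IH, vadd_assoc; auto.
Qed.

Lemma weights_app l1 l2 : weights (l1 ++ l2) = weights l1 + weights l2.
Proof. induction l1 as [|p l1 IH]; simpl; [ring | rewrite IH; ring]. Qed.

Lemma wsum_scale_weights c l : wsum (scale_weights c l) = vscal c (wsum l).
Proof. induction l as [|p l IH]; simpl; [rewrite vscal_0_r; auto | rewrite IH; vec_ext]. Qed.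

Lemma weights_scale_weights c l : weights (scale_weights c l) = c * weights l.
Proof. induction l as [|p l IH]; simpl; [ring | rewrite IH; ring]. Qed.

Lemma wsum_scale_points c l : wsum (scale_points c l) = vscal c (wsum l).
Proof. induction l as [|p l IH]; simpl; [rewrite vscal_0_r; auto | rewrite IH; vec_ext]. Qed.

Lemma weights_scale_points c l : weights (scale_points c l) = weights l.
Proof. induction l as [|p l IH]; simpl; [ring | rewrite IH; ring]. Qed.

Lemma weights_nonneg (A : vec -> Prop) l : weighted_in A l -> 0 <= weights l.
Proof.
  induction 1 as [|p l [hp _] _ IH]; simpl; lra.
Qed.

Lemma wsum_weights_eq0 (A : vec -> Prop) l : weighted_in A l -> weights l = 0 -> wsum l = vzero.
Proof.
  induction 1 as [|p l [hp _] hl IH]; simpl; intros hw; auto.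
  pose proof (weights_nonneg _ _ hl).
  assert (fst p = 0) as -> by lra. rewrite IH by lra. vec_ext.
Qed.

Lemma conv_mono (A B : vec -> Prop) x : (forall v, A v -> B v) -> conv A x -> conv B x.
Proof.
  intros hAB [l [hl [hw ->]]]. exists l. split; auto.
  eapply Forall_impl; [|exact hl]. intros p [h1 h2]; auto.
Qed.

Lemma conv_vscal (A B : vec -> Prop) c x :
  (forall v, A v -> B (vscal c v)) -> conv A x -> conv B (vscal c x).
Proof.
  intros hAB [l [hl [hw ->]]]. exists (scale_points c l).
  rewrite weights_scale_points, wsum_scale_points. split; auto.
  apply Forall_map. eapply Forall_impl; [|exact hl]. simpl. intros p [h1 h2]; auto.
Qed.

Lemma conv_incl (A : vec -> Prop) x : A x -> conv A x.
Proof.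
  intros h. exists ((1, x) :: nil). simpl. rewrite vadd_0_r, vscal_1_l.
  repeat constructor; auto; simpl; lra.
Qed.

Lemma conv_convex (A : vec -> Prop) : convex (conv A).
Proof.
  intros x y t [l1 [h1 [w1 ->]]] [l2 [h2 [w2 ->]]] ht.
  exists (scale_weights t l1 ++ scale_weights (1 - t) l2).
  rewrite weights_app, !weights_scale_weights, wsum_app, !wsum_scale_weights, w1, w2.
  split; [|split; [ring | auto]].
  apply Forall_app; split; apply Forall_map;
    (eapply Forall_impl; [|eassumption]); simpl; intros p [hp hA];
    split; auto; apply Rmult_le_pos; lra.
Qed.

Lemma conv_fsupp (A : vec -> Prop) x : (forall v, A v -> fsupp v) -> conv A x -> fsupp x.
Proof.
  intros hA [l [hl [_ ->]]]. clear - hA hl.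
  induction hl as [|p l [hp hAp] _ IH]; simpl.
  - apply fsupp_vzero.
  - apply fsupp_vadd; [apply fsupp_vscal; auto | auto].
Qed.

(* Peel off the first point: the normalized sum is a convex combination of it
   and the normalized sum of the rest. *)
Lemma convex_normalized_wsum (A C : vec -> Prop) l : convex C -> (forall v, A v -> C v) ->
  weighted_in A l -> 0 < weights l -> C (vscal (/ weights l) (wsum l)).
Proof.
  intros hC hAC. induction 1 as [|p l [hp hA] hl IH]; simpl; intros hpos; [lra|].
  pose proof (weights_nonneg _ _ hl) as hn.
  destruct (Req_dec (weights l) 0) as [h0|h0].
  - rewrite (wsum_weights_eq0 _ _ hl h0), h0.
    replace (vscal (/ (fst p + 0)) (vadd (vscal (fst p) (snd p)) vzero)) with (snd p).
    + apply hAC; auto.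
    + rewrite h0 in hpos. vec_ext. field. lra.
  - specialize (IH ltac:(lra)).
    set (s := fst p + weights l) in *.
    replace (vscal (/ s) (vadd (vscal (fst p) (snd p)) (wsum l))) with
      (vadd (vscal (fst p / s) (snd p)) (vscal (1 - fst p / s) (vscal (/ weights l) (wsum l)))).
    + apply hC; auto. split.
      * unfold Rdiv; apply Rmult_le_pos; [lra | apply Rlt_le, Rinv_0_lt_compat; lra].
      * apply Rmult_le_reg_r with s; [unfold s; lra|].
        unfold Rdiv. rewrite Rmult_assoc, Rinv_l by (unfold s; lra). unfold s; lra.
    + vec_ext. unfold s. field. split; lra.
Qed.

Lemma conv_least (A C : vec -> Prop) x : convex C -> (forall v, A v -> C v) -> conv A x -> C x.
Proof.
  intros hC hAC [l [hl [hw ->]]].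
  pose proof (convex_normalized_wsum A C l hC hAC hl ltac:(lra)) as H.
  rewrite hw, Rinv_1, vscal_1_l in H. exact H.
Qed.

(* With [k] points of weight [1/t] each, the partial sums of [lincomb] stay
   in the (partial) hull; the points are [t] times the summands. *)
Lemma lincomb_conv (A : vec -> Prop) lam a m t : (1 <= t)%nat ->
  (forall i, (1 <= i)%nat -> (i <= t)%nat -> A (vscal (INR t * lam i * a) (e (m i)))) ->
  conv A (lincomb lam a m t).
Proof.
  intros ht hA. assert (hT : 0 < INR t) by (apply lt_0_INR; lia).
  assert (partial : forall k, (k <= t)%nat -> exists l, weighted_in A l /\
     weights l = INR k / INR t /\ wsum l = lincomb lam a m k).
  { induction k as [|k IH]; intros hk.
    - exists nil. simpl. split; [constructor | split; [unfold Rdiv; ring | reflexivity]].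
    - destruct (IH ltac:(lia)) as [l [h1 [h2 h3]]].
      exists (l ++ (/ INR t, vscal (INR t * lam (S k) * a) (e (m (S k)))) :: nil).
      rewrite weights_app, wsum_app, h2, h3, S_INR. simpl. split; [|split].
      + apply Forall_app; split; auto. constructor; [simpl; split | constructor].
        * apply Rlt_le, Rinv_0_lt_compat; auto.
        * apply hA; lia.
      + field. lra.
      + vec_ext. field. lra. }
  destruct (partial t (le_n t)) as [l [h1 [h2 h3]]]. exists l.
  split; [auto | split; [rewrite h2; field; lra | auto]].
Qed.

(** * The vector topology generated by a base at zero *)

Record zero_base (B : (vec -> Prop) -> Prop) : Prop := {
  zb_inhabited : exists V, B V;
  zb_fsupp : forall V x, B V -> V x -> fsupp x;
  zb_vzero : forall V, B V -> V vzero;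
  zb_meet : forall V1 V2, B V1 -> B V2 -> exists V3, B V3 /\ forall x, V3 x -> V1 x /\ V2 x;
  zb_half : forall V, B V -> exists V', B V' /\ forall u v, V' u -> V' v -> V (vadd u v);
  zb_bounded_scal : forall V M, B V -> 0 < M ->
    exists V', B V' /\ forall s u, Rabs s <= M -> V' u -> V (vscal s u);
  zb_absorbing : forall V x, B V -> fsupp x ->
    exists d, 0 < d /\ forall r, Rabs r < d -> V (vscal r x);
  zb_e : forall V, B V -> exists N, forall n, (N < n)%nat -> V (e n)
}.

Definition tau_of_base (B : (vec -> Prop) -> Prop) (U : vec -> Prop) : Prop :=
  (forall x, U x -> fsupp x) /\ forall x, U x -> exists V, B V /\ forall v, V v -> U (vadd x v).

Section GeneratedTopology.
Variable B : (vec -> Prop) -> Prop.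
Hypothesis hB : zero_base B.

Lemma tau_of_base_topology : topology (tau_of_base B).
Proof.
  split; [|split; [|split; [|split]]].
  - intros U [h _]; auto.
  - split; intros x [].
  - split; auto. intros x hx. destruct (zb_inhabited _ hB) as [V hV]. exists V. split; auto.
    intros v hv. apply fsupp_vadd; auto. eapply zb_fsupp; eauto.
  - intros F hF. split.
    + intros x [U [hU hx]]. apply (proj1 (hF U hU)); auto.
    + intros x [U [hU hx]]. destruct (proj2 (hF U hU) x hx) as [V [hV hV']].
      exists V; split; auto. intros v hv. exists U; auto.
  - intros U V [hU1 hU2] [hV1 hV2]. split.
    + intros x [h _]; auto.
    + intros x [hx1 hx2].
      destruct (hU2 x hx1) as [V1 [b1 h1]], (hV2 x hx2) as [V2 [b2 h2]].
      destruct (zb_meet _ hB V1 V2 b1 b2) as [V3 [b3 h3]]. exists V3; split; auto.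
      intros v hv; destruct (h3 v hv); split; auto.
Qed.

(* The open set witnessing the neighbourhood: points [z] with [z + V' ⊆ W] for
   some [V'] in [B]; it is open because [B] admits halving. *)
Lemma nbhd_of_base V W x : B V -> fsupp x -> (forall v, V v -> W (vadd x v)) ->
  nbhd (tau_of_base B) W x.
Proof.
  intros hV hx hW.
  exists (fun z => fsupp z /\ exists V', B V' /\ forall v, V' v -> W (vadd z v)).
  split; [split | split].
  - intros z [h _]; auto.
  - intros z [hz [V' [b' h']]]. destruct (zb_half _ hB V' b') as [V'' [b'' h'']].
    exists V''. split; auto. intros v hv. split.
    + apply fsupp_vadd; auto. eapply zb_fsupp; eauto.
    + exists V''. split; auto. intros w hw. rewrite vadd_assoc. apply h', h''; auto.
  - split; auto. exists V; auto.
  - intros z [_ [V' [b' h']]]. rewrite <- (vadd_0_r z). apply h', (zb_vzero _ hB); auto.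
Qed.

Lemma base_nbhd_vzero V : B V -> nbhd (tau_of_base B) V vzero.
Proof.
  intros bV. apply nbhd_of_base with V; auto using fsupp_vzero.
  intros v hv; rewrite vadd_0_l; auto.
Qed.

Lemma base_of_nbhd W x : nbhd (tau_of_base B) W x ->
  exists V, B V /\ forall v, V v -> W (vadd x v).
Proof.
  intros [O [[_ hO] [hx hOW]]]. destruct (hO x hx) as [V [bV hV]]. eauto.
Qed.

Lemma tau_of_base_vector : vector_topology (tau_of_base B).
Proof.
  split; [apply tau_of_base_topology | split].
  - intros x y hx hy W hW. destruct (base_of_nbhd _ _ hW) as [V [bV hV]].
    destruct (zb_half _ hB V bV) as [V' [b' h']].
    exists (fun u => exists v, V' v /\ u = vadd x v), (fun u => exists v, V' v /\ u = vadd y v).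
    split; [|split].
    + eapply nbhd_of_base; eauto.
    + eapply nbhd_of_base; eauto.
    + intros u w [v [hv ->]] [v' [hv' ->]].
      replace (vadd (vadd x v) (vadd y v')) with (vadd (vadd x y) (vadd v v')) by vec_ext.
      apply hV, h'; auto.
  - intros t x hx W hW. destruct (base_of_nbhd _ _ hW) as [V [bV hV]].
    destruct (zb_half _ hB V bV) as [V' [b' h']].
    destruct (zb_absorbing _ hB V' x b' hx) as [d [hd Hd]].
    assert (hM : 0 < Rabs t + 1) by (pose proof (Rabs_pos t); lra).
    destruct (zb_bounded_scal _ hB V' (Rabs t + 1) b' hM) as [V'' [b'' h'']].
    exists (Rmin d 1), (fun u => exists v, V'' v /\ u = vadd x v). split; [|split].
    + apply Rmin_glb_lt; lra.
    + eapply nbhd_of_base; eauto.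
    + intros s u hs [v [hv ->]].
      pose proof (Rlt_le_trans _ _ _ hs (Rmin_l d 1)) as hsd.
      pose proof (Rlt_le_trans _ _ _ hs (Rmin_r d 1)) as hs1.
      replace (vscal s (vadd x v)) with (vadd (vscal t x) (vadd (vscal (s - t) x) (vscal s v)))
        by vec_ext.
      apply hV, h'; [apply Hd; auto | apply h''; auto].
      replace s with (t + (s - t)) by ring. eapply Rle_trans; [apply Rabs_triang | lra].
Qed.

Lemma tau_of_base_e_to_zero : e_to_zero (tau_of_base B).
Proof.
  intros U hU. destruct (base_of_nbhd _ _ hU) as [V [bV hV]]. destruct (zb_e _ hB V bV) as [N hN].
  exists N. intros n hn. rewrite <- (vadd_0_l (e n)). apply hV, hN; auto.
Qed.

Lemma tau_of_base_locally_convex : (forall V, B V -> convex V) -> locally_convex (tau_of_base B).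
Proof.
  intros hc. split; [apply tau_of_base_vector|]. intros U hU.
  destruct (base_of_nbhd _ _ hU) as [V [bV hV]].
  exists V. split; [apply base_nbhd_vzero; auto | split; [apply hc; auto|]].
  intros x hx. rewrite <- (vadd_0_l x). apply hV; auto.
Qed.

End GeneratedTopology.

Lemma nbhd_finer (tau1 tau2 : (vec -> Prop) -> Prop) W x :
  (forall U, tau1 U -> tau2 U) -> nbhd tau1 W x -> nbhd tau2 W x.
Proof. intros h [O [hO hx]]. exists O; auto. Qed.

Lemma base_at0_of_finest tau B : zero_base B ->
  (forall U, tau_of_base B U -> tau U) ->
  (forall W, nbhd tau W vzero -> exists V, B V /\ forall x, V x -> W x) ->
  base_at0 tau B.
Proof.
  intros hB hfin hsub. split; auto.
  intros V bV. apply nbhd_finer with (tau_of_base B); auto. apply base_nbhd_vzero; auto.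
Qed.

(** * The bases N_s and conv N_s *)

Lemma Ns_zero_base : zero_base Ns.
Proof.
  assert (gI : in_A_seq (fun _ => INR)) by (intro; apply in_A_INR).
  constructor.
  - exists (Useq (fun _ => INR)). apply Ns_Useq; auto.
  - intros V x [as_ [g h]] hx. apply h in hx. eapply Useq_fsupp; eauto.
  - intros V [as_ [g h]]. apply h, Useq_vzero; auto.
  - intros V1 V2 [as1 [g1 h1]] [as2 [g2 h2]].
    exists (Useq (fun k n => Rmin (as1 k n) (as2 k n))). split.
    + apply Ns_Useq. intro k. apply in_A_min; auto.
    + intros x hx. split; [apply h1 | apply h2]; (eapply Useq_mono; [| |exact hx]); auto;
        intros; [apply Rmin_l | apply Rmin_r].
  - intros V [as_ [g h]]. destruct (Useq_half as_ g) as [bs [gb hb]].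
    exists (Useq bs). split; [apply Ns_Useq; auto|]. intros u v hu hv. apply h, hb; auto.
  - intros V M [as_ [g h]] hM. exists (Useq (fun k n => as_ k n / M)). split.
    + apply Ns_Useq. intro k. apply in_A_div; auto.
    + intros s u hs hu. apply h. eapply Useq_div; eauto.
  - intros V x [as_ [g h]] hx. destruct (Useq_absorbing as_ g x hx) as [d [hd Hd]].
    exists d; split; auto. intros r hr; apply h, Hd; auto.
  - intros V [as_ [g h]]. destruct (Useq_e as_ g) as [N hN]. exists N. intros; apply h, hN; auto.
Qed.

Definition Nconv (W : vec -> Prop) : Prop := exists V, Ns V /\ forall x, W x <-> conv V x.

Lemma Nconv_conv_Useq as_ : in_A_seq as_ -> Nconv (conv (Useq as_)).
Proof. intros g. exists (Useq as_). split; [apply Ns_Useq; auto | tauto]. Qed.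

Lemma Nconv_elim W : Nconv W -> exists as_, in_A_seq as_ /\ forall x, W x <-> conv (Useq as_) x.
Proof.
  intros [V [[as_ [g hV]] hW]]. exists as_. split; auto.
  intro x. rewrite hW. split; apply conv_mono; intro v; apply hV.
Qed.

Lemma Nconv_convex W : Nconv W -> convex W.
Proof.
  intros hW x y t hx hy ht. destruct (Nconv_elim W hW) as [as_ [g h]].
  apply h. apply h in hx; apply h in hy. apply conv_convex; auto.
Qed.

Lemma Nconv_zero_base : zero_base Nconv.
Proof.
  constructor.
  - exists (conv (Useq (fun _ => INR))). apply Nconv_conv_Useq. intro; apply in_A_INR.
  - intros V x hV hx. destruct (Nconv_elim V hV) as [as_ [g h]]. apply h in hx.
    eapply conv_fsupp; [|exact hx]. intros; eapply Useq_fsupp; eauto.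
  - intros V hV. destruct (Nconv_elim V hV) as [as_ [g h]]. apply h, conv_incl, Useq_vzero; auto.
  - intros V1 V2 hV1 hV2.
    destruct (Nconv_elim V1 hV1) as [as1 [g1 h1]], (Nconv_elim V2 hV2) as [as2 [g2 h2]].
    exists (conv (Useq (fun k n => Rmin (as1 k n) (as2 k n)))). split.
    + apply Nconv_conv_Useq. intro k. apply in_A_min; auto.
    + intros x hx. split; [apply h1 | apply h2]; (eapply conv_mono; [|exact hx]); intros v hv;
        (eapply Useq_mono; [| |exact hv]); auto; intros; [apply Rmin_l | apply Rmin_r].
  - intros V hV. destruct (Nconv_elim V hV) as [as_ [g h]].
    exists (conv (Useq (fun k n => as_ k n / 2))). split.
    + apply Nconv_conv_Useq. intro k. apply in_A_div; auto; lra.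
    + intros u v hu hv. apply h.
      (* halving the radii compensates the factor 2 *)
      replace (vadd u v) with (vscal 2 (vadd (vscal (1/2) u) (vscal (1 - 1/2) v)))
        by (vec_ext; field).
      eapply conv_vscal; [|apply conv_convex; [exact hu | exact hv | lra]].
      intros w hw. eapply Useq_div; eauto; [lra | rewrite Rabs_right; lra].
  - intros V M hV hM. destruct (Nconv_elim V hV) as [as_ [g h]].
    exists (conv (Useq (fun k n => as_ k n / M))). split.
    + apply Nconv_conv_Useq. intro k. apply in_A_div; auto.
    + intros s u hs hu. apply h. eapply conv_vscal; [|exact hu].
      intros w hw. eapply Useq_div; eauto.
  - intros V x hV hx. destruct (Nconv_elim V hV) as [as_ [g h]].
    destruct (Useq_absorbing as_ g x hx) as [d [hd Hd]].
    exists d; split; auto. intros r hr; apply h, conv_incl, Hd; auto.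
  - intros V hV. destruct (Nconv_elim V hV) as [as_ [g h]].
    destruct (Useq_e as_ g) as [N hN]. exists N. intros; apply h, conv_incl, hN; auto.
Qed.

(** * Neighbourhoods of zero in a vector topology with e_n -> 0 *)

Fixpoint radius (g : nat -> nat) (n j : nat) : R :=
  match j with
  | O => 0
  | S j' => if Nat.ltb (g j') n then Rmax (INR j) (radius g n j') else radius g n j'
  end.

Lemma radius_witness g n j t : Rabs t < radius g n j ->
  exists i, (g i < n)%nat /\ Rabs t <= INR i + 1.
Proof.
  induction j as [|j IH]; cbn [radius]; intros h.
  - pose proof (Rabs_pos t); lra.
  - destruct (Nat.ltb_spec (g j) n); auto.
    unfold Rmax in h. destruct (Rle_dec (INR (S j)) (radius g n j)); auto.
    exists j. rewrite S_INR in h. split; [auto | lra].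
Qed.

Lemma radius_ge g n j i : (i < j)%nat -> (g i < n)%nat -> INR i + 1 <= radius g n j.
Proof.
  induction j as [|j IH]; intros hij hg; [lia|]. cbn [radius].
  destruct (Nat.eq_dec i j) as [->|hne].
  - destruct (Nat.ltb_spec (g j) n); [|lia]. rewrite <- S_INR. apply Rmax_l.
  - destruct (Nat.ltb_spec (g j) n); [eapply Rle_trans; [|apply Rmax_r]|]; apply IH; auto; lia.
Qed.

Section FineTopology.
Variable tau : (vec -> Prop) -> Prop.
Hypothesis htau : vector_topology tau.
Hypothesis htau_e : e_to_zero tau.

Lemma nbhd_mem W x : nbhd tau W x -> W x.
Proof. intros [O [_ [h1 h2]]]; auto. Qed.

Lemma nbhd_meet U V x : nbhd tau U x -> nbhd tau V x -> nbhd tau (fun y => U y /\ V y) x.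
Proof.
  destruct htau as [[_ [_ [_ [_ hI]]]] _].
  intros [O1 [o1 [x1 s1]]] [O2 [o2 [x2 s2]]]. exists (fun y => O1 y /\ O2 y).
  split; [apply hI; auto | split; [auto | intros y [a b]; split; auto]].
Qed.

Lemma nbhd_vzero_half W : nbhd tau W vzero ->
  exists W', nbhd tau W' vzero /\ forall u v, W' u -> W' v -> W (vadd u v).
Proof.
  intros hW. destruct htau as [_ [hadd _]]. rewrite <- (vadd_0_l vzero) in hW.
  destruct (hadd vzero vzero fsupp_vzero fsupp_vzero W hW) as [U [V [hU [hV h]]]].
  exists (fun y => U y /\ V y). split; [apply nbhd_meet; auto|].
  intros u v [a _] [_ b]; auto.
Qed.

Lemma nbhd_vzero_vscal W c : nbhd tau W vzero ->
  exists W', nbhd tau W' vzero /\ forall u, W' u -> W (vscal c u).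
Proof.
  intros hW. destruct htau as [_ [_ hs]]. rewrite <- (vscal_0_r c) in hW.
  destruct (hs c vzero fsupp_vzero W hW) as [d [U [hd [hU h]]]].
  exists U; split; auto. intros u hu. apply h; auto. rewrite Rminus_diag, Rabs_R0; auto.
Qed.

Lemma nbhd_vzero_small_scal W : nbhd tau W vzero -> exists d U, 0 < d /\ nbhd tau U vzero /\
  forall s u, Rabs s < d -> U u -> W (vscal s u).
Proof.
  intros hW. destruct htau as [_ [_ hs]]. rewrite <- (vscal_0_r 0) in hW.
  destruct (hs 0 vzero fsupp_vzero W hW) as [d [U [hd [hU h]]]].
  exists d, U. repeat split; auto. intros s u hsd hu. apply h; auto. rewrite Rminus_0_r; auto.
Qed.

Lemma nbhd_vzero_small_e W n : nbhd tau W vzero -> (1 <= n)%nat ->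
  exists d, 0 < d /\ forall s, Rabs s < d -> W (vscal s (e n)).
Proof.
  intros hW hn. destruct htau as [_ [_ hs]]. rewrite <- (vscal_0_l (e n)) in hW.
  destruct (hs 0 (e n) (fsupp_e n hn) W hW) as [d [U [hd [hU h]]]].
  exists d. split; auto. intros s hsd. apply h; [rewrite Rminus_0_r; auto | apply nbhd_mem; auto].
Qed.

(* [t e_n = (t/c) (c e_n)] with [c e_n] eventually in [U] and [|t/c| <= d/2]. *)
Lemma nbhd_vzero_bounded_e W M : nbhd tau W vzero -> 0 < M ->
  exists N, forall n t, (N < n)%nat -> Rabs t <= M -> W (vscal t (e n)).
Proof.
  intros hW hM. destruct (nbhd_vzero_small_scal W hW) as [d [U [hd [hU h]]]].
  set (c := 2 * M / d). assert (hc : 0 < c) by (unfold c; apply Rdiv_lt_0_compat; lra).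
  destruct (nbhd_vzero_vscal U c hU) as [W' [hW' h']]. destruct (htau_e W' hW') as [N hN].
  exists N. intros n t hn ht.
  replace (vscal t (e n)) with (vscal (t / c) (vscal c (e n))) by (vec_ext; field; lra).
  apply h; [|apply h'; auto].
  unfold Rdiv. rewrite Rabs_mult, Rabs_inv, (Rabs_right c) by lra.
  unfold c. replace (/ (2 * M / d)) with (d / (2 * M)) by (field; lra).
  apply Rle_lt_trans with (M * (d / (2 * M))).
  - apply Rmult_le_compat_r; auto. unfold Rdiv.
    apply Rmult_le_pos; [lra | apply Rlt_le, Rinv_0_lt_compat; lra].
  - replace (M * (d / (2 * M))) with (d / 2) by (field; lra). lra.
Qed.

(* [a_n] is the larger of a radius that works for the single index [n] and of
   the largest bound [j + 1] whose threshold [g j] has been passed by [n]. *)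
Lemma nbhd_vzero_Sa W : nbhd tau W vzero -> exists a, in_A a /\ forall x, Sa a x -> W x.
Proof.
  intros hW.
  destruct (choice (fun j N => forall n t, (N < n)%nat -> Rabs t <= INR j + 1 -> W (vscal t (e n))))
    as [g hg].
  { intro j. apply nbhd_vzero_bounded_e; auto. pose proof (pos_INR j); lra. }
  destruct (choice (fun n d => (1 <= n)%nat -> 0 < d /\ forall s, Rabs s < d -> W (vscal s (e n))))
    as [r hr].
  { intro n. destruct (Compare_dec.le_lt_dec 1 n) as [hn|hn].
    - destruct (nbhd_vzero_small_e W n hW hn) as [d hd]. exists d; auto.
    - exists 1. intros; lia. }
  exists (fun n => Rmax (r n) (radius g n n)). split; [split|].
  - intros n hn. eapply Rlt_le_trans; [apply (hr n hn) | apply Rmax_l].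
  - intro M. destruct (INR_unbounded M) as [J hJ]. exists (S (Nat.max (g J) J)).
    intros n hn. eapply Rlt_le_trans; [|apply Rmax_r].
    eapply Rlt_le_trans; [|apply (radius_ge g n n J); lia]. lra.
  - intros x [n [t [hn [ht ->]]]]. unfold Rmax in ht.
    destruct (Rle_dec (r n) (radius g n n)).
    + destruct (radius_witness _ _ _ _ ht) as [i [hi1 hi2]]. eapply hg; eauto.
    + apply (hr n hn); auto.
Qed.

Lemma nbhd_vzero_halving_chain W : nbhd tau W vzero -> exists Vs : nat -> vec -> Prop,
  Vs O = W /\ (forall k, nbhd tau (Vs k) vzero) /\
  forall k u v, Vs (S k) u -> Vs (S k) v -> Vs k (vadd u v).
Proof.
  intros hW.
  destruct (choice (fun V V' => nbhd tau V vzero ->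
      nbhd tau V' vzero /\ forall u v, V' u -> V' v -> V (vadd u v))) as [f hf].
  { intro V. destruct (classic (nbhd tau V vzero)) as [h|h].
    - destruct (nbhd_vzero_half V h) as [V' hV']. exists V'; auto.
    - exists V; intros; contradiction. }
  assert (hVs : forall k, nbhd tau (Nat.iter k f W) vzero).
  { induction k as [|k IH]; simpl; auto. apply hf; auto. }
  exists (fun k => Nat.iter k f W). split; [reflexivity | split; auto].
  intros k. apply (hf _ (hVs k)).
Qed.

(* With [S(a_k) ⊆ V_(k+1)], induction on [k] gives
   [S(a_0) + ... + S(a_k) + V_(k+1) ⊆ V_0]. *)
Lemma nbhd_vzero_Useq W : nbhd tau W vzero ->
  exists as_, in_A_seq as_ /\ forall x, Useq as_ x -> W x.
Proof.
  intros hW. destruct (nbhd_vzero_halving_chain W hW) as [Vs [hV0 [hVs hHalf]]].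
  destruct (choice (fun k a => in_A a /\ forall x, Sa a x -> Vs (S k) x)) as [as_ has].
  { intro k. apply nbhd_vzero_Sa, hVs. }
  exists as_. split; [intro k; apply has|].
  assert (partial : forall k y, Ssum as_ k y -> forall w, Vs (S k) w -> W (vadd y w)).
  { induction k as [|k IH]; simpl; intros y hy w hw.
    - rewrite <- hV0. apply hHalf; auto. apply has; auto.
    - destruct hy as [y1 [s [hy1 [hs ->]]]]. rewrite vadd_assoc. apply IH; auto.
      apply hHalf; auto. apply has; auto. }
  intros x [k hk]. rewrite <- (vadd_0_r x). apply (partial k); auto. apply nbhd_mem; auto.
Qed.

End FineTopology.

Lemma nbhd_vzero_conv_Useq tau W : locally_convex tau -> e_to_zero tau -> nbhd tau W vzero ->
  exists as_, in_A_seq as_ /\ forall x, conv (Useq as_) x -> W x.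
Proof.
  intros [hv hc] he hW. destruct (hc W hW) as [C [hC [cC sC]]].
  destruct (nbhd_vzero_Useq tau hv he C hC) as [as_ [g h]]. exists as_. split; auto.
  intros x hx. apply sC. eapply conv_least; eauto.
Qed.

Lemma increasing_gt q (m : nat -> nat) t : (q < m 1%nat)%nat ->
  (forall i, (1 <= i)%nat -> (i < t)%nat -> (m i < m (S i))%nat) ->
  forall i, (1 <= i)%nat -> (i <= t)%nat -> (q < m i)%nat.
Proof.
  intros h1 hinc. induction i as [|i IH]; intros hi1 hit; [lia|].
  destruct (Nat.eq_dec i O) as [->|hne]; auto.
  specialize (IH ltac:(lia) ltac:(lia)). specialize (hinc i ltac:(lia) ltac:(lia)). lia.
Qed.

(* Choose [q] with [a_0(n) > t a] for [n > q]. *)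
Lemma conv_Useq_lincomb as_ t a : in_A_seq as_ -> (1 <= t)%nat -> 0 < a ->
  exists q : nat, (1 <= q)%nat /\
    forall (m : nat -> nat) (lam : nat -> R),
      (q < m 1%nat)%nat ->
      (forall i, (1 <= i)%nat -> (i < t)%nat -> (m i < m (S i))%nat) ->
      (forall i, (1 <= i)%nat -> (i <= t)%nat -> -1 <= lam i <= 1) ->
      conv (Useq as_) (lincomb lam a m t).
Proof.
  intros g ht ha. destruct (proj2 (g O) (INR t * a)) as [N hN].
  assert (hta : 0 < INR t * a) by (apply Rmult_lt_0_compat; [apply lt_0_INR; lia | auto]).
  exists (S N). split; [lia|]. intros m lam hm1 hinc hlam.
  apply lincomb_conv; auto. intros i hi1 hit. exists O.
  pose proof (increasing_gt _ _ _ hm1 hinc i hi1 hit) as hmi.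
  exists (m i), (INR t * lam i * a). split; [lia | split; auto].
  apply Rle_lt_trans with (INR t * a); [|apply hN; lia].
  pose proof (hlam i hi1 hit).
  replace (INR t * lam i * a) with (lam i * (INR t * a)) by ring. apply Rabs_le. split; nra.
Qed.

Theorem proposition2p1 (mu nu : (vec -> Prop) -> Prop) :
  is_mu mu -> is_nu nu ->
  base_at0 mu Ns /\
  base_at0 nu (fun W => exists V, Ns V /\ (forall x, W x <-> conv V x)) /\
  (forall U, nbhd nu U vzero ->
   forall t : nat, (1 <= t)%nat -> forall a : R, 0 < a ->
   exists q : nat, (1 <= q)%nat /\
     forall (m : nat -> nat) (lam : nat -> R),
       (q < m 1%nat)%nat ->
       (forall i, (1 <= i)%nat -> (i < t)%nat -> (m i < m (S i))%nat) ->
       (forall i, (1 <= i)%nat -> (i <= t)%nat -> -1 <= lam i <= 1) ->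
       U (lincomb lam a m t)).
Proof.
  intros [vmu [emu fmu]] [lnu [enu fnu]]. split; [|split].
  - apply base_at0_of_finest; [apply Ns_zero_base | |].
    + apply fmu; [apply tau_of_base_vector | apply tau_of_base_e_to_zero]; apply Ns_zero_base.
    + intros W hW. destruct (nbhd_vzero_Useq mu vmu emu W hW) as [as_ [g h]].
      exists (Useq as_). split; [apply Ns_Useq |]; auto.
  - apply (base_at0_of_finest nu Nconv); [apply Nconv_zero_base | |].
    + apply fnu; [apply tau_of_base_locally_convex, Nconv_convex | apply tau_of_base_e_to_zero];
        apply Nconv_zero_base.
    + intros W hW. destruct (nbhd_vzero_conv_Useq nu W lnu enu hW) as [as_ [g h]].
      exists (conv (Useq as_)). split; [apply Nconv_conv_Useq |]; auto.
  - intros U hU t ht a ha. destruct (nbhd_vzero_conv_Useq nu U lnu enu hU) as [as_ [g h]].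
    destruct (conv_Useq_lincomb as_ t a g ht ha) as [q [hq H]].
    exists q. split; [exact hq |]. intros m lam h1 h2 h3. apply h, H; auto.
Qed.
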